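(* Let $d\ge1$ and let $P$ be a probability distribution on $\{0,1\}^d$ with $P(\nu)>0$ for all $\nu\in\{0,1\}^d$. Fix $\omega\in\{0,1\}^d$. Let $A_\omega$ be the $(2^d-1)\times d$ binary matrix with rows indexed by $\nu\in\{0,1\}^d\setminus\{\omega\}$ and entries $A_\omega(\nu,i):=1$ if $\nu_i\ne\omega_i$ and $0$ otherwise, and let $b_\omega$ be the vector indexed by $\nu\in\{0,1\}^d\setminus\{\omega\}$ with $b_\omega(\nu):=\ln(P(\nu)/P(\omega))$. Then, under the bijection $q\mapsto y$, $y_i=(1-2\omega_i)\ln\left(\frac{q_i}{1-q_i}\right)$, from $(0,1)^d$ onto $\mathbb{R}^d$, the set $\mathcal{Q}_\omega\cap(0,1)^d$ corresponds exactly to the set of $y\in\mathbb{R}^d$ satisfying the coordinatewise inequalities $A_\omega y\le b_\omega$.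
   Context: For $\omega\in\{0,1\}^d$ and $q\in[0,1]^d$, $f_\omega(q):=\prod_{i=1}^d q_i^{-\omega_i}(1-q_i)^{\omega_i-1}\in\mathbb{R}\cup\{+\infty\}$ (with $0^0=1$, $1/0=+\infty$), and $\mathcal{Q}_\omega:=\{q\in[0,1]^d\mid \forall\nu\in\{0,1\}^d:\ P(\omega)f_\omega(q)\le P(\nu)f_\nu(q)\}$. *)

From HB Require Import structures.
From mathcomp Require Import all_boot all_order all_algebra.
From mathcomp Require Import all_classical all_reals all_analysis.
Set Implicit Arguments. Unset Strict Implicit. Unset Printing Implicit Defensive.
Import Order.TTheory GRing.Theory Num.Theory.
Local Open Scope ring_scope.
Local Open Scope classical_set_scope.

(* The cube {0,1}^d is {ffun 'I_d -> bool}; points q of [0,1]^d are functions 'I_d -> R. *)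
Definition cube (d : nat) := {ffun 'I_d -> bool}.

Definition inv_ext (R : realType) (x : R) : \bar R :=
  if x == 0 then +oo%E else (x^-1)%:E.

(* f_omega(q) = prod_i q_i^{-omega_i} (1-q_i)^{omega_i - 1} with 0^0 = 1, 1/0 = +oo:
   the i-th factor is 1/q_i if omega_i = 1 and 1/(1-q_i) if omega_i = 0. *)
Definition f_om (R : realType) (d : nat) (om : cube d) (q : 'I_d -> R) : \bar R :=
  (\prod_(i < d) inv_ext (if om i then q i else 1 - q i)%R)%E.

Definition Qset (R : realType) (d : nat) (P : cube d -> R) (om : cube d)
  : set ('I_d -> R) :=
  [set q | (forall i, 0 <= q i <= 1) /\
           forall nu : cube d, ((P om)%:E * f_om om q <= (P nu)%:E * f_om nu q)%E].

Definition open_cube (R : realType) (d : nat) : set ('I_d -> R) :=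
  [set q | forall i, 0 < q i < 1].

Definition ymap (R : realType) (d : nat) (om : cube d) (q : 'I_d -> R) : 'I_d -> R :=
  fun i => (1 - 2 * (om i)%:R) * ln (q i / (1 - q i)).

Definition Amat (R : realType) (d : nat) (om nu : cube d) (i : 'I_d) : R :=
  (nu i != om i)%:R.

Definition bvec (R : realType) (d : nat) (P : cube d -> R) (om nu : cube d) : R :=
  ln (P nu / P om).

(* On the open cube, f_omega(q) is the reciprocal of the Bernoulli likelihood
   L_omega(q) = prod_i q_i^omega_i (1 - q_i)^(1 - omega_i), so
   P(omega) f_omega(q) <= P(nu) f_nu(q) says L_nu(q) / L_omega(q) <= P(nu) / P(omega).
   The factors of L_nu / L_omega with nu_i = omega_i cancel, and each remaining
   one is exp y_i, because y_i is the logit of q_i signed by (-1)^omega_i; taking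
   logarithms gives the row nu of A_omega y <= b_omega. The signed logit is
   inverted coordinatewise by the sigmoid, hence a bijection (0,1)^d -> R^d. *)

From HB Require Import structures.
From mathcomp Require Import all_boot all_order all_algebra.
From mathcomp Require Import all_classical all_reals all_analysis.
From mathcomp Require Import ring lra.
Set Implicit Arguments. Unset Strict Implicit. Unset Printing Implicit Defensive.
Import Order.TTheory GRing.Theory Num.Theory.
Local Open Scope ring_scope.
Local Open Scope classical_set_scope.

Section Logit.
Variable R : realType.

Definition logit (q : R) : R := ln (q / (1 - q)).

Definition expit (t : R) : R := expR t / (1 + expR t).

Lemma expit_in01 t : 0 < expit t < 1.
Proof.
have e0 := expR_gt0 t.
by rewrite divr_gt0 ?ltr_pdivrMr /=; lra.
Qed.

Lemma expitK : cancel expit logit.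
Proof.
move=> t; rewrite /logit /expit; have e0 := expR_gt0 t.
have -> : expR t / (1 + expR t) / (1 - expR t / (1 + expR t)) = expR t.
  by field; apply/andP; split; apply/eqP; lra.
exact: expRK.
Qed.

Lemma logitK q : 0 < q < 1 -> expit (logit q) = q.
Proof.
move=> /andP[q0 q1]; rewrite /expit /logit lnK ?posrE ?divr_gt0 ?subr_gt0 //.
by field; apply/andP; split; apply/eqP; lra.
Qed.

End Logit.

Lemma sign_boolE (R : ringType) (b : bool) : 1 - 2 * b%:R = (-1) ^+ b :> R.
Proof. by case: b; rewrite ?mulr1 ?mulr0 ?subr0 // mulr2n opprD addNKr. Qed.

Lemma ler_pdiv_swap (R : numFieldType) (x y a b : R) :
  0 < x -> 0 < a -> 0 < b -> (x / a <= y / b) = (b / a <= y / x).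
Proof.
move=> x0 a0 b0.
by rewrite !ler_pdivlMr // !(mulrAC _ _^-1) !ler_pdivrMr // mulrC.
Qed.

Section Cube.
Variables (R : realType) (d : nat).
Implicit Types (om nu w : cube d) (q y : 'I_d -> R).

Lemma ymapE om q i : ymap om q i = (-1) ^+ om i * logit (q i).
Proof. by rewrite /ymap sign_boolE. Qed.

Definition ymap_inv om y : 'I_d -> R := fun i => expit ((-1) ^+ om i * y i).

Lemma ymap_inv_open om y : open_cube (ymap_inv om y).
Proof. by move=> i; apply: expit_in01. Qed.

Lemma ymap_invK om y : ymap om (ymap_inv om y) = y.
Proof. by apply/funext => i; rewrite ymapE expitK signrMK. Qed.

Lemma ymapK om : {in @open_cube R d, cancel (ymap om) (ymap_inv om)}.
Proof.
move=> q /set_mem q01; apply/funext => i.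
by rewrite /ymap_inv ymapE signrMK logitK.
Qed.

Lemma ymap_bij om : set_bij (@open_cube R d) setT (ymap om).
Proof.
split=> //; first exact: can_in_inj (ymapK om).
by move=> y _; exists (ymap_inv om y); [apply: ymap_inv_open | apply: ymap_invK].
Qed.

Definition bernoulli_prob (b : bool) (x : R) : R := if b then x else 1 - x.

Definition bernoulli_lik w q : R := \prod_(i < d) bernoulli_prob (w i) (q i).

Lemma bernoulli_prob_gt0 b (x : R) : 0 < x < 1 -> 0 < bernoulli_prob b x.
Proof. by case: b => /andP[x0 x1] /=; lra. Qed.

Lemma bernoulli_lik_gt0 w q : open_cube q -> 0 < bernoulli_lik w q.
Proof. by move=> q01; apply: prodr_gt0 => i _; apply: bernoulli_prob_gt0. Qed.

Lemma expR_logit_bernoulli (a b : bool) (x : R) : 0 < x < 1 ->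
  expR ((a != b)%:R * ((-1) ^+ b * logit x)) =
    bernoulli_prob a x / bernoulli_prob b x.
Proof.
move=> x01; have /andP[x0 x1] := x01.
have lx : 0 < x / (1 - x) by rewrite divr_gt0 ?subr_gt0.
case: a; case: b => /=; rewrite ?mul0r ?expR0 ?mul1r ?mulN1r /logit.
- by rewrite divff ?lt0r_neq0.
- by rewrite lnK.
- by rewrite expRN lnK ?invf_div.
- by rewrite divff ?lt0r_neq0 ?subr_gt0.
Qed.

Lemma f_om_open w q : open_cube q -> f_om w q = ((bernoulli_lik w q)^-1)%:E.
Proof.
move=> q01; rewrite /f_om /bernoulli_lik -prodfV -prodEFin.
apply: eq_bigr => i _; rewrite /inv_ext.
by have /lt0r_neq0/negbTE-> := bernoulli_prob_gt0 (w i) (q01 i); case: (w i).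
Qed.

Lemma expR_Amat_ymap om nu q : open_cube q ->
  expR (\sum_(i < d) @Amat R d om nu i * ymap om q i) =
    bernoulli_lik nu q / bernoulli_lik om q.
Proof.
move=> q01; rewrite expR_sum /bernoulli_lik -prodf_div.
by apply: eq_bigr => i _; rewrite ymapE expR_logit_bernoulli.
Qed.

Lemma f_om_le_AmatE (P : cube d -> R) om nu q :
  0 < P om -> 0 < P nu -> open_cube q ->
  ((P om)%:E * f_om om q <= (P nu)%:E * f_om nu q)%E =
    (\sum_(i < d) @Amat R d om nu i * ymap om q i <= bvec P om nu).
Proof.
move=> Pom Pnu q01.
rewrite !f_om_open // -!EFinM lee_fin /bvec -[in RHS]ler_expR lnK ?posrE ?divr_gt0 //.
by rewrite expR_Amat_ymap // ler_pdiv_swap ?bernoulli_lik_gt0.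
Qed.

End Cube.

Theorem corollary2 (R : realType) (d : nat) (P : cube d -> R) (om : cube d) :
  (1 <= d)%N ->
  (forall nu : cube d, 0 < P nu) ->
  \sum_(nu : cube d) P nu = 1 ->
  set_bij (@open_cube R d) setT (ymap om) /\
  ymap om @` (Qset P om `&` @open_cube R d) =
    [set y : 'I_d -> R | forall nu : cube d, nu != om ->
                           \sum_(i < d) @Amat R d om nu i * y i <= bvec P om nu].
Proof.
move=> _ Ppos _; split; first exact: ymap_bij.
apply/seteqP; split.
- by move=> _ [q [[_ Qq] q01] <-] nu _; rewrite -f_om_le_AmatE //; apply: Qq.
- move=> y Ay; exists (ymap_inv om y); last exact: ymap_invK.
  have q01 := ymap_inv_open om y.
  split=> //; split=> [i|nu].
    by have /andP[q0 q1] := q01 i; rewrite !ltW.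
  have [->//|nu_om] := eqVneq nu om.
  by rewrite f_om_le_AmatE ?ymap_invK //; apply: Ay.
Qed.
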